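(* For every $n\ge1$, the Zimin word $Z_n$ is an involutory isoterm relative to $\mathcal{K}_3^\rho$. That is, if $w$ is an involutory word such that the identity $Z_n\approx w$ holds in $\mathcal{K}_3^\rho$, then $w=Z_n$.
   Context: $\mathcal{K}_3$ is the monoid presented by generators $c,h_1,h_2$ and relations $h_1h_2h_1=h_1$, $h_2h_1h_2=h_2$, and $h_i^2=ch_i=h_ic$ for $i=1,2$. $\mathcal{K}_3^\rho$ is $\mathcal{K}_3$ regarded as an involution semigroup under the rotation ${}^\rho$, which is the unique involutory anti-automorphism fixing $c$ and swapping $h_1\leftrightarrow h_2$. Zimin words are defined by $Z_1=x_1$ and $Z_{n+1}=Z_nx_{n+1}Z_n$. Involutory words over $X$ are elements of the free semigroup on $X\cup\{x^\star\mid x\in X\}$, with involution $(x_1\cdots x_m)^\star=x_m^\star\cdots x_1^\star$ and $(x^\star)^\star=x$; an identity $u\approx v$ between involutory words holds in $\mathcal{K}_3^\rho$ if both sides agree under every assignment of elements to letters, with $x^\star$ interpreted via ${}^\rho$. *)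

From mathcomp Require Import all_boot.
Set Implicit Arguments. Unset Strict Implicit. Unset Printing Implicit Defensive.

Inductive kgen : Type := gc | gh1 | gh2.

(* Elements of the free monoid on {c,h1,h2} are [seq kgen]; the empty word is 1. *)

Inductive krel : seq kgen -> seq kgen -> Prop :=
  | kr_h121 : krel [:: gh1; gh2; gh1] [:: gh1]
  | kr_h212 : krel [:: gh2; gh1; gh2] [:: gh2]
  | kr_sq1  : krel [:: gh1; gh1] [:: gc; gh1]
  | kr_sq2  : krel [:: gh2; gh2] [:: gc; gh2]
  | kr_c1   : krel [:: gc; gh1] [:: gh1; gc]
  | kr_c2   : krel [:: gc; gh2] [:: gh2; gc].

(* The congruence on the free monoid generated by the relations:
   two words are equal in K_3 iff they are related by [kcong]. *)
Inductive kcong : seq kgen -> seq kgen -> Prop :=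
  | kc_step : forall u v l r, krel l r -> kcong (u ++ l ++ v) (u ++ r ++ v)
  | kc_refl : forall u, kcong u u
  | kc_sym  : forall u v, kcong u v -> kcong v u
  | kc_trans : forall u v w, kcong u v -> kcong v w -> kcong u w.

Definition kswap (g : kgen) : kgen :=
  match g with gc => gc | gh1 => gh2 | gh2 => gh1 end.
Definition krho (s : seq kgen) : seq kgen := rev (map kswap s).

(* Involutory words over the alphabet X = nat: a letter (x, false) is x,
   a letter (x, true) is x^*. Involutory words are nonempty sequences. *)
Definition iletter := (nat * bool)%type.
Definition iword := seq iletter.

Definition eval_letter (phi : nat -> seq kgen) (a : iletter) : seq kgen :=
  if a.2 then krho (phi a.1) else phi a.1.
Definition eval_iword (phi : nat -> seq kgen) (w : iword) : seq kgen :=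
  flatten (map (eval_letter phi) w).

Definition holds_K3rho (u v : iword) : Prop :=
  forall phi : nat -> seq kgen, kcong (eval_iword phi u) (eval_iword phi v).

(* Zimin words: Z_1 = x_1, Z_{n+1} = Z_n x_{n+1} Z_n  (zimin 0 is unused). *)
Fixpoint zimin (n : nat) : iword :=
  match n with
  | 0 => [::]
  | m.+1 => zimin m ++ (m.+1, false) :: zimin m
  end.

From mathcomp Require Import all_boot.
Set Implicit Arguments. Unset Strict Implicit. Unset Printing Implicit Defensive.

(** Every element of K_3 is c^k times an alternating word in h1, h2, and that
  word is determined by its first and last letter; so K_3 acts on the states
  (k, first and last h-letter), and this action yields invariants of identities.
  Write Z_(n+1) = x1 Z' x1 ... x1 Z' x1 with Z' the Zimin word on x2..x_(n+1),
  and suppose Z_(n+1) ~ w.  Erasing x1 gives Z' ~ w', so by induction the other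
  letters of w spell Z'.  Erasing everything but x1 gives x1^m ~ u; substituting
  c for all letters shows |u| = m, and substituting h1 sends x1^m to c^(m-1) h1,
  whose c-weight is maximal among h-words of length m, so u = x1^m without stars.
  Finally x1 |-> h1, other letters |-> h2 sends Z_(n+1) to h1 (h2 h1)^k, which
  has no c, and this forces x1 to alternate with the letters of w', starting
  and ending w. *)

Definition hgen (b : bool) : kgen := if b then gh2 else gh1.

(* The state (k, Some (f, l)) stands for c^k times the alternating word that
  starts with h_f and ends with h_l (h1 is [false]); appending h_l again adds
  a c because h_l^2 = c h_l, while h1 h2 h1 = h1 keeps the word alternating. *)
Local Notation kstate := (nat * option (bool * bool))%type.

Definition hstep (s : kstate) (b : bool) : kstate :=
  let: (k, e) := s in
  if e is Some (f, l) then (if l == b then k.+1 else k, Some (f, b))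
  else (k, Some (b, b)).

Definition kstep (s : kstate) (g : kgen) : kstate :=
  match g with gc => (s.1.+1, s.2) | gh1 => hstep s false | gh2 => hstep s true end.

Lemma kstep_kcong u v : kcong u v -> forall s, foldl kstep s u = foldl kstep s v.
Proof.
elim=> {u v} [u v l r lr|u|u v _ IHuv|u v w _ IHuv _ IHvw] s //.
- rewrite !foldl_cat; congr foldl.
  by case: lr; case: (foldl kstep s u) => k [[[] []]|].
- by rewrite IHuv IHvw.
Qed.

Lemma kstep_map_hgen (T : Type) (f : T -> bool) s u :
  foldl kstep s [seq hgen (f x) | x <- u] = foldl hstep s (map f u).
Proof. by elim: u s => //= x u IH s; rewrite IH; case: (f x). Qed.

Lemma kstep_nseq_c k e m : foldl kstep (k, e) (nseq m gc) = (k + m, e).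
Proof. by elim: m k => [|m IH] k /=; rewrite ?addn0 // IH addnS. Qed.

Lemma hstep_weight_le s bs : s.1 <= (foldl hstep s bs).1.
Proof.
elim: bs s => //= b bs IH [k e]; apply: leq_trans (IH _).
by case: e => [[f l]|] //=; case: eqP.
Qed.

Lemma hstep_weight_ub s bs : (foldl hstep s bs).1 <= s.1 + size bs.
Proof.
elim: bs s => [|b bs IH] [k e] /=; first by rewrite addn0.
apply: leq_trans (IH _) _; rewrite addnS -addSn leq_add2r.
by case: e => [[f l]|] //=; case: eqP.
Qed.

Lemma hstep_first k f l bs : omap fst (foldl hstep (k, Some (f, l)) bs).2 = Some f.
Proof. by elim: bs k l => //= b bs IH k l; apply: IH. Qed.

Lemma hstep_nseq k f m :
  foldl hstep (k, Some (f, false)) (nseq m false) = (k + m, Some (f, false)).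
Proof. by elim: m k => [|m IH] k /=; rewrite ?addn0 // IH addnS. Qed.

Lemma hstep_full_weight k f l bs :
  (foldl hstep (k, Some (f, l)) bs).1 = k + size bs -> all (pred1 l) bs.
Proof.
elim: bs k l => //= b bs IH k l; case: (eqVneq l b) => [<-|lb] full.
  by rewrite (IH k.+1 l) // full addnS.
have := hstep_weight_ub (k, Some (f, b)) bs.
by rewrite full /= addnS ltnn.
Qed.

Lemma hstep_constant k bs f l :
  foldl hstep (k, None) bs = (k + (size bs).-1, Some (f, l)) -> all (pred1 f) bs.
Proof.
case: bs => //= b bs run.
have := hstep_first k b b bs; rewrite run => -[->].
by rewrite eqxx (hstep_full_weight (k:=k) (f:=b)) ?run.
Qed.

Definition weave (T : Type) (a : T) (v : seq T) : seq T :=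
  a :: flatten [seq [:: x; a] | x <- v].

Lemma weave_cat (T : Type) (a b : T) v v' :
  weave a (v ++ b :: v') = weave a v ++ b :: weave a v'.
Proof. by rewrite /weave map_cat flatten_cat. Qed.

Lemma all_weave (T : Type) (P : pred T) a v : all P (weave a v) = P a && all P v.
Proof. by elim: v => //= x v; case: (P a) => //= ->. Qed.

Lemma filter_weave (T : Type) (P : pred T) a v :
  ~~ P a -> filter P (weave a v) = filter P v.
Proof. by move=> /negbTE Pa; elim: v => /= [|x v]; rewrite Pa // => ->. Qed.

Lemma filter_weave_nseq (T : Type) (P : pred T) a v :
  P a -> all (predC P) v -> filter P (weave a v) = nseq (size v).+1 a.
Proof.
move=> Pa; elim: v => /= [|x v IH]; rewrite Pa // => /andP [/negbTE -> /IH].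
by rewrite /= Pa => ->.
Qed.

Lemma hstep_weave (T : Type) (a : T) (p : pred T) k v :
  ~~ p a -> all p v -> foldl hstep (k, None) (map p (weave a v)) = (k, Some (false, false)).
Proof.
move=> /negbTE pa; rewrite /= pa.
by elim: v => //= x v IH /andP [-> /IH]; rewrite pa.
Qed.

Lemma hstep_weave_tail (T : eqType) (a : T) (p : pred T) k f l w :
  {in w, forall x, ~~ p x -> x = a} ->
  foldl hstep (k, Some (f, l)) (map p w) = (k, Some (f, false)) ->
  w = if l then weave a (filter p w) else behead (weave a (filter p w)).
Proof.
elim: w l => [|x w IH] l /= wa; first by case=> ->.
case: (p x) (wa x (mem_head x w)) (sub_in1 (@mem_behead _ (x :: w)) wa)
  => [_|/(_ isT) ->] {}wa /=.
- case: l => /= run; last by rewrite {1}(IH true wa run).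
  by have := hstep_weight_le (k.+1, Some (f, true)) (map p w); rewrite run ltnn.
- case: l => /= run; first by rewrite {1}(IH false wa run).
  by have := hstep_weight_le (k.+1, Some (f, false)) (map p w); rewrite run ltnn.
Qed.

Lemma weave_of_hstep (T : eqType) (a : T) (p : pred T) k w :
  {in w, forall x, ~~ p x -> x = a} ->
  foldl hstep (k, None) (map p w) = (k, Some (false, false)) ->
  w = weave a (filter p w).
Proof.
case: w => [|x w] //= wa.
have := hstep_first k (p x) (p x) (map p w).
case: (p x) (wa x (mem_head x w)) (sub_in1 (@mem_behead _ (x :: w)) wa).
  by move=> _ _ first run; rewrite run in first.
by move=> /(_ isT) -> {}wa _ run; rewrite {1}(hstep_weave_tail (w:=w) wa run).
Qed.

Definition starfree (u : iword) : bool := all (fun x => ~~ x.2) u.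

Lemma eval_iword_cons phi x u :
  eval_iword phi (x :: u) = eval_letter phi x ++ eval_iword phi u.
Proof. by []. Qed.

Lemma eval_iword_erase (P : pred nat) phi u :
  eval_iword (fun z => if P z then phi z else [::]) u =
  eval_iword phi [seq x <- u | P x.1].
Proof.
elim: u => //= -[z b] u IH; rewrite eval_iword_cons IH /eval_letter /=.
by case: (P z); rewrite ?eval_iword_cons //; case: b.
Qed.

Lemma eval_iword_gens (f : nat -> kgen) u :
  eval_iword (fun z => [:: f z]) u =
  [seq if x.2 then kswap (f x.1) else f x.1 | x <- u].
Proof. by elim: u => //= -[z b] u IH; rewrite eval_iword_cons IH /eval_letter; case: b. Qed.

Lemma eval_iword_gens_starfree (f : nat -> kgen) u :
  starfree u -> eval_iword (fun z => [:: f z]) u = [seq f x.1 | x <- u].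
Proof. by move=> /allP sf; rewrite eval_iword_gens; apply/eq_in_map => x /sf /negbTE ->. Qed.

Lemma holds_K3rho_erase (P : pred nat) u w :
  holds_K3rho u w -> holds_K3rho [seq x <- u | P x.1] [seq x <- w | P x.1].
Proof. by move=> uw phi; rewrite -!eval_iword_erase. Qed.

Lemma holds_K3rho_size u w : holds_K3rho u w -> size w = size u.
Proof.
have eval_c v : eval_iword (fun _ => [:: gc]) v = nseq (size v) gc.
  by elim: v => //= -[? []] v IH; rewrite eval_iword_cons IH.
move=> /(_ (fun _ => [:: gc])) /kstep_kcong /(_ (0, None)).
by rewrite !eval_c !kstep_nseq_c => -[].
Qed.

Lemma holds_K3rho_power y m w :
  all (fun x => x.1 == y) w -> holds_K3rho (nseq m.+1 (y, false)) w ->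
  w = nseq m.+1 (y, false).
Proof.
move=> /allP wy yw.
have size_w : size w = m.+1 by rewrite (holds_K3rho_size yw) size_nseq.
have eval_h1 u : eval_iword (fun _ => [:: gh1]) u = [seq hgen x.2 | x <- u].
  by rewrite eval_iword_gens; apply: eq_map => -[? []].
move: yw => /(_ (fun _ => [:: gh1])) /kstep_kcong /(_ (0, None)).
rewrite !eval_h1 !kstep_map_hgen map_nseq /= hstep_nseq add0n.
have {1}-> : m = 0 + (size (map snd w)).-1 by rewrite size_map size_w.
move=> /esym /hstep_constant /allP w_sf.
suff /all_pred1P -> : all (pred1 (y, false)) w by rewrite size_w.
apply/allP => -[z b] zw.
by rewrite /= xpair_eqE; apply/andP; split; [apply: wy zw | apply: w_sf (map_f snd zw)].
Qed.

Lemma weave_isoterm y v w :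
  all (fun x => x.1 != y) v -> starfree v -> starfree w ->
  holds_K3rho (weave (y, false) v) w -> w = weave (y, false) [seq x <- w | x.1 != y].
Proof.
move=> v_avoids v_sf w_sf /(_ (fun z => [:: hgen (z != y)])) /kstep_kcong /(_ (0, None)).
have wv_sf : starfree (weave (y, false) v) by rewrite /starfree all_weave.
rewrite !eval_iword_gens_starfree // !kstep_map_hgen hstep_weave ?eqxx //.
by move/esym; apply: weave_of_hstep => -[z b] /(allP w_sf) /negbTE /= -> /negPn /eqP ->.
Qed.

Fixpoint zimin_from (o n : nat) : iword :=
  if n is m.+1 then zimin_from o m ++ (o + m.+1, false) :: zimin_from o m else [::].

Lemma zimin_from0 n : zimin n = zimin_from 0 n.
Proof. by elim: n => //= n ->; rewrite add0n. Qed.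

Lemma zimin_fromS o n : zimin_from o n.+1 = weave (o.+1, false) (zimin_from o.+1 n).
Proof.
elim: n => [|n IH]; first by rewrite /= addn1.
rewrite -[zimin_from o n.+2]/(zimin_from o n.+1 ++ (o + n.+2, false) :: zimin_from o n.+1).
rewrite -[zimin_from o.+1 n.+1]/(zimin_from o.+1 n ++ (o.+1 + n.+1, false) :: zimin_from o.+1 n).
by rewrite IH weave_cat addSnnS.
Qed.

Lemma zimin_from_letters o n : all (fun x => (o < x.1) && ~~ x.2) (zimin_from o n).
Proof.
elim: n => //= n IH; rewrite all_cat IH /=.
by rewrite addnS ltnS leq_addr.
Qed.

Lemma zimin_from_isoterm o n w :
  holds_K3rho (zimin_from o n) w -> w = zimin_from o n.
Proof.
elim: n o w => [|n IH] o w Hw.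
  by apply/size0nil; rewrite (holds_K3rho_size Hw).
rewrite zimin_fromS in Hw *; set y := o.+1; set v := zimin_from y n.
have /allP v_letters := zimin_from_letters y n.
have v_avoids : all (fun x => x.1 != y) v.
  by apply/allP => x /v_letters /andP [/gtn_eqF ->].
have v_sf : starfree v by apply/allP => x /v_letters /andP [].
have erased : [seq x <- w | x.1 != y] = v.
  apply: IH; have := holds_K3rho_erase (fun z => z != y) Hw.
  by rewrite filter_weave ?eqxx // (all_filterP v_avoids).
have powers : [seq x <- w | x.1 == y] = nseq (size v).+1 (y, false).
  apply: holds_K3rho_power; first exact: filter_all.
  have := holds_K3rho_erase (fun z => z == y) Hw.
  by rewrite filter_weave_nseq //= eqxx.
have w_sf : starfree w.
  apply/allP => x xw; case: (eqVneq x.1 y) => [xy | xny].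
    have : x \in nseq (size v).+1 (y, false) by rewrite -powers mem_filter xy eqxx.
    by move=> /nseqP [-> _].
  have : x \in v by rewrite -erased mem_filter xny.
  exact: (allP v_sf).
by rewrite (weave_isoterm v_avoids v_sf w_sf Hw) erased.
Qed.

Theorem mainTheorem9 :
  forall (n : nat), 1 <= n ->
  forall (w : iword), w <> [::] ->
  holds_K3rho (zimin n) w -> w = zimin n.
Proof. by move=> n _ w _; rewrite zimin_from0; apply: zimin_from_isoterm. Qed.
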